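(* If a finite simple graph $G$ contains an induced subgraph isomorphic to the path $P_k$ on $k$ vertices, where $k\ge 3$, then $\mathrm{mur}(G)\ge k-2$.
   Context: For a finite simple undirected graph $G$ on vertices $v_1,\dots,v_n$, let $A_G$ be its $(0,1)$-adjacency matrix, $D_G=\mathrm{diag}(d_1,\dots,d_n)$ with $d_i$ the degree of $v_i$, $I$ the $n\times n$ identity matrix and $J$ the $n\times n$ all-ones matrix. A universal adjacency matrix of $G$ is any matrix $\alpha A_G+\beta I+\gamma J+\delta D_G$ with real scalars $\alpha,\beta,\gamma,\delta$ and $\alpha\neq 0$. The minimum universal rank $\mathrm{mur}(G)$ is the minimum rank over all universal adjacency matrices of $G$. *)

From mathcomp Require Import all_boot all_order all_algebra.
Set Implicit Arguments. Unset Strict Implicit. Unset Printing Implicit Defensive.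
Import GRing.Theory Num.Theory.
Local Open Scope ring_scope.

Definition simple_graph (n : nat) (e : rel 'I_n) : Prop :=
  symmetric e /\ irreflexive e.

Definition deg (n : nat) (e : rel 'I_n) (i : 'I_n) : nat := #|[set j | e i j]|.

Definition adjmx (R : nzRingType) (n : nat) (e : rel 'I_n) : 'M[R]_n :=
  \matrix_(i, j) (e i j)%:R.

Definition degmx (R : nzRingType) (n : nat) (e : rel 'I_n) : 'M[R]_n :=
  \matrix_(i, j) ((i == j)%:R * (deg e i)%:R).

Definition onesmx (R : nzRingType) (n : nat) : 'M[R]_n := const_mx 1.

Definition univ_adj (R : nzRingType) (n : nat) (e : rel 'I_n)
  (alpha beta gamma delta : R) : 'M[R]_n :=
  alpha *: adjmx R e + beta *: 1%:M + gamma *: onesmx R n + delta *: degmx R e.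

(* mur(G) >= m : every universal adjacency matrix (alpha <> 0) has rank >= m,
   i.e. the minimum universal rank is at least m. *)
Definition mur_ge (R : fieldType) (n : nat) (e : rel 'I_n) (m : nat) : Prop :=
  forall alpha beta gamma delta : R, alpha != 0 ->
    (m <= \rank (univ_adj e alpha beta gamma delta))%N.

Definition has_induced_path (n : nat) (e : rel 'I_n) (k : nat) : Prop :=
  exists f : 'I_k -> 'I_n, injective f /\
    forall i j : 'I_k, e (f i) (f j) = ((i.+1 == j) || (j.+1 == i))%N.

(** Take the induced path [v_0 - v_1 - ... - v_(k-1)] and the square minor of a
    universal adjacency matrix [M] with rows [v_0, ..., v_(k-2)] and columns
    [v_1, ..., v_(k-1)].  Above the diagonal its row and column vertices are
    distinct and non-adjacent, so only [gamma J] contributes there; on the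
    diagonal they are adjacent and distinct, contributing [alpha + gamma].
    Removing the rank-one matrix [gamma J] hence leaves a triangular matrix
    with diagonal [alpha <> 0], of rank [k - 1], so [rank M >= k - 2]. *)
From mathcomp Require Import all_boot all_order all_algebra.
From mathcomp Require Import zify.
Set Implicit Arguments.
Unset Strict Implicit.
Unset Printing Implicit Defensive.

Import GRing.Theory Num.Theory.
Local Open Scope ring_scope.

Section RankBounds.

Variable F : fieldType.

Lemma mxrank_const_mx_le1 m n (a : F) : (\rank (const_mx a : 'M[F]_(m, n)) <= 1)%N.
Proof.
have -> : const_mx a = (const_mx a : 'cV[F]_m) *m (const_mx 1 : 'rV[F]_n).
  by apply/matrixP => i j; rewrite !mxE big_ord1 !mxE mulr1.
exact: leq_trans (mxrankM_maxl _ _) (rank_leq_col _).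
Qed.

Lemma mxrank_mxsub_le m n p q (f : 'I_p -> 'I_m) (g : 'I_q -> 'I_n)
    (A : 'M[F]_(m, n)) :
  (\rank (mxsub f g A) <= \rank A)%N.
Proof.
have -> : mxsub f g A = rowsub f 1%:M *m A *m colsub g 1%:M.
  rewrite mulmx_colsub mul_rowsub_mx mulmx1 mul1mx.
  by apply/matrixP => i j; rewrite !mxE.
exact: leq_trans (mxrankM_maxl _ _) (mxrankM_maxr _ _).
Qed.

Lemma mxrank_subr_const_mx m n (A : 'M[F]_(m, n)) a :
  (\rank (A - const_mx a)%R <= \rank A + 1)%N.
Proof.
apply: leq_trans (mxrank_add _ _) _.
by rewrite mxrank_opp leq_add2l mxrank_const_mx_le1.
Qed.

Lemma mxrank_trig n (A : 'M[F]_n) :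
  is_trig_mx A -> (forall i, A i i != 0) -> \rank A = n.
Proof.
move=> trigA diagA; apply: mxrank_unit.
by rewrite unitmxE unitfE det_trig //; apply/prodf_neq0 => i _.
Qed.

End RankBounds.

Lemma univ_adj_offdiag (R : nzRingType) n (e : rel 'I_n) (a b g d : R) (i j : 'I_n) :
  i != j -> univ_adj e a b g d i j = a * (e i j)%:R + g.
Proof.
by move/negbTE=> nij; rewrite !mxE nij !(mulr0, mul0r, addr0) mulr1.
Qed.

Definition path_minor (R : Type) n k (f : 'I_k.+1 -> 'I_n) (M : 'M[R]_n) : 'M[R]_k :=
  mxsub (fun i => f (widen_ord (leqnSn k) i)) (fun j => f (lift ord0 j)) M.

Section PathMinor.

Variables (R : nzRingType) (n k : nat) (e : rel 'I_n) (f : 'I_k.+1 -> 'I_n).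
Hypothesis f_inj : injective f.
Hypothesis f_path : forall i j, e (f i) (f j) = ((i.+1 == j) || (j.+1 == i))%N.

Lemma path_minor_univ_adjE (a b g d : R) (i j : 'I_k) : (i <= j)%N ->
  path_minor f (univ_adj e a b g d) i j = a * (i == j)%:R + g.
Proof.
move=> le_ij; rewrite mxE univ_adj_offdiag; last first.
  by apply/eqP=> /f_inj /(congr1 val) /=; rewrite /bump /=; lia.
rewrite f_path /= /bump /= !add1n eqSS; congr (a * _%:R + g).
have -> : (j.+2 == i)%N = false by apply/negbTE/eqP; lia.
by rewrite orbF.
Qed.

Lemma path_minor_sub_const_trig (a b g d : R) :
  is_trig_mx (path_minor f (univ_adj e a b g d) - const_mx g).
Proof.
apply/is_trig_mxP => i j lt_ij.
have /negbTE i_neq_j : i != j by apply: contraTneq lt_ij => ->; rewrite ltnn.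
by rewrite mxE path_minor_univ_adjE ?(ltnW lt_ij) // !mxE i_neq_j mulr0 add0r subrr.
Qed.

Lemma path_minor_sub_const_diag (a b g d : R) (i : 'I_k) :
  (path_minor f (univ_adj e a b g d) - const_mx g) i i = a.
Proof. by rewrite mxE path_minor_univ_adjE // !mxE eqxx mulr1 addrK. Qed.

End PathMinor.

Theorem lemma6 (R : realFieldType) (n : nat) (e : rel 'I_n) (k : nat) :
  simple_graph e -> (3 <= k)%N -> has_induced_path e k ->
  mur_ge R e (k - 2).
Proof.
move=> _ k_ge3 [f [f_inj f_path]] a b g d a_neq0.
case: k k_ge3 f f_inj f_path => // k _ f f_inj f_path.
set M := univ_adj e a b g d.
have rank_minor : \rank (path_minor f M - const_mx g) = k.
  apply: mxrank_trig => [|i]; first exact: path_minor_sub_const_trig.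
  by rewrite path_minor_sub_const_diag.
have rank_minor_le : (\rank (path_minor f M) <= \rank M)%N.
  exact: mxrank_mxsub_le.
have := mxrank_subr_const_mx (path_minor f M) g.
rewrite rank_minor; lia.
Qed.
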